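(* Let $m$ be an odd positive integer, let $\tilde H\in\Omega_{2n}$ be invertible and Hermitian, and let $\tilde B\in\Omega_{2n}$ be $\tilde H$-selfadjoint with $\sigma(\tilde B)\subset(-\infty,0)$. Then there exists an $\tilde H$-selfadjoint $\tilde A\in\Omega_{2n}$ such that $\tilde A^m=\tilde B$.
   Context: $\Omega_{2n}=\{\begin{bmatrix}A_1&\bar A_2\\-A_2&\bar A_1\end{bmatrix}: A_1,A_2\in\mathbb{C}^{n\times n}\}\subset\mathbb{C}^{2n\times 2n}$. For an invertible Hermitian $H$, $A$ is $H$-selfadjoint if $HA=A^*H$. $\sigma(\cdot)$ denotes the spectrum. *)

From HB Require Import structures.
From mathcomp Require Import all_boot all_order all_algebra all_field.
Set Implicit Arguments. Unset Strict Implicit. Unset Printing Implicit Defensive.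
Import Order.TTheory GRing.Theory Num.Theory.
Local Open Scope ring_scope.

Definition conjmx (m n : nat) (A : 'M[algC]_(m, n)) : 'M[algC]_(m, n) :=
  map_mx (fun z => z^*) A.

Definition adjmx (m n : nat) (A : 'M[algC]_(m, n)) : 'M[algC]_(n, m) :=
  (conjmx A)^T.

Definition in_Omega (n : nat) (M : 'M[algC]_(n + n)) : Prop :=
  exists A1 A2 : 'M[algC]_n,
    M = block_mx A1 (conjmx A2) (- A2) (conjmx A1).

Definition is_hermitian_mx (k : nat) (H : 'M[algC]_k) : Prop := adjmx H = H.

Definition H_selfadjoint (k : nat) (H A : 'M[algC]_k) : Prop :=
  H *m A = adjmx A *m H.

Definition spec_neg_real (k : nat) (B : 'M[algC]_k) : Prop :=
  forall a : algC, eigenvalue B a -> (a \is Num.real) /\ a < 0.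

Fixpoint mxpow (k : nat) (A : 'M[algC]_k) (m : nat) : 'M[algC]_k :=
  match m with
  | 0 => 1%:M
  | m'.+1 => A *m mxpow A m'
  end.

From Pilot Require Import Defs.
From HB Require Import structures.
From mathcomp Require Import all_boot all_order all_algebra all_field.
Import Order.TTheory GRing.Theory Num.Theory.
Local Open Scope ring_scope.

(* The root is taken to be a polynomial in B with REAL coefficients:
   A := q(B).  Two independent facts then finish the proof.

   1. Algebra of real polynomials in B.  Both structural properties of B are
      intertwining relations: B is H-selfadjoint iff H B = B^* H, and
      B lies in Omega_{2n} iff B J = J conj(B) for J = [0 I; -I 0].  Any
      intertwining P X = Y P passes to p(X), p(Y), and conjugating or
      adjoining q(B) conjugates the coefficients of q; hence for a real q the
      matrix q(B) is again H-selfadjoint and in Omega_{2n}.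
   2. Interpolation.  If every eigenvalue of B is a nonzero real and m is odd,
      there is a real q with char_poly B | q^m - X; by Cayley-Hamilton
      q(B)^m = B.  Such q is built root by root (counted with multiplicity),
      correcting q by a real multiple of the product chi of the roots treated
      so far: a new root l is met by solving (q(l) + c chi(l))^m = l with a
      real odd m-th root, a repeated root by a first-order (Hensel) step. *)

(* Entrywise conjugation from Defs, not the homonymous MathComp operation. *)
Local Notation conjmx := Pilot.Defs.conjmx.

Lemma trmx_horner_mx (R : comNzRingType) k (A : 'M[R]_k.+1) p :
  (horner_mx A p)^T = horner_mx A^T p.
Proof.
elim/poly_ind: p => [|p c IHp]; first by rewrite !rmorph0 trmx0.
rewrite {1}mulrC !rmorphD !rmorphM /= !horner_mx_X !horner_mx_C linearD /=.
by rewrite -!mulmxE trmx_mul IHp tr_scalar_mx.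
Qed.

Lemma intertwine_horner_mx (R : comNzRingType) k (P X Y : 'M[R]_k.+1) p :
  P *m X = Y *m P -> P *m horner_mx X p = horner_mx Y p *m P.
Proof.
move=> PXY; elim/poly_ind: p => [|p c IHp].
  by rewrite !rmorph0 mulmx0 mul0mx.
rewrite !rmorphD !rmorphM /= !horner_mx_X !horner_mx_C mulmxDr mulmxDl -!mulmxE.
by rewrite mulmxA IHp -!mulmxA PXY scalar_mxC.
Qed.

Section Conjugation.
Variables m n : nat.
Implicit Types A : 'M[algC]_(m, n).

Lemma conjmxK : involutive (@conjmx m n).
Proof. by move=> A; apply/matrixP=> i j; rewrite !mxE conjCK. Qed.

Lemma conjmxN A : conjmx (- A) = - conjmx A.
Proof. exact: map_mxN. Qed.

Lemma conjmx_block p q (Aul : 'M_(p, q)) (Aur : 'M_(p, n)) (Adl : 'M_(m, q))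
    (Adr : 'M_(m, n)) :
  conjmx (block_mx Aul Aur Adl Adr) =
  block_mx (conjmx Aul) (conjmx Aur) (conjmx Adl) (conjmx Adr).
Proof. exact: map_block_mx. Qed.

End Conjugation.

Lemma conjmx_horner_mx k (A : 'M[algC]_k.+1) p :
  conjmx (horner_mx A p) = horner_mx (conjmx A) (map_poly Num.conj p).
Proof. exact: map_horner_mx. Qed.

Lemma adjmx_horner_mx k (A : 'M[algC]_k.+1) p :
  adjmx (horner_mx A p) = horner_mx (adjmx A) (map_poly Num.conj p).
Proof. by rewrite /adjmx conjmx_horner_mx trmx_horner_mx. Qed.

Definition Omega_J n : 'M[algC]_(n + n) := block_mx 0 1%:M (- 1%:M) 0.

Lemma in_OmegaP n (M : 'M[algC]_(n + n)) :
  in_Omega M <-> M *m Omega_J n = Omega_J n *m conjmx M.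
Proof.
rewrite /Omega_J -[M]submxK conjmx_block !mulmx_block.
rewrite !mul0mx !mulmx0 !mulmxN !mulNmx !mul1mx !mulmx1 !add0r !addr0.
split=> [[A1 [A2 /eq_block_mx[-> -> -> ->]]] | /eq_block_mx[Eur _ Edr _]].
  by rewrite !conjmxN !conjmxK.
exists (ulsubmx M), (- dlsubmx M).
by rewrite opprK conjmxN -Eur (oppr_inj Edr) !opprK.
Qed.

Definition real_poly (p : {poly algC}) : Prop := map_poly Num.conj p = p.

Lemma Omega_horner_mx n (B : 'M[algC]_(n.+1 + n.+1)) p :
  real_poly p -> in_Omega B -> in_Omega (n := n.+1) (horner_mx B p).
Proof.
move=> p_real /in_OmegaP BJ; apply/in_OmegaP.
rewrite conjmx_horner_mx p_real; symmetry; exact: intertwine_horner_mx.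
Qed.

Lemma selfadjoint_horner_mx k (H B : 'M[algC]_k.+1) p :
  real_poly p -> H_selfadjoint H B -> H_selfadjoint H (horner_mx B p).
Proof.
rewrite /H_selfadjoint adjmx_horner_mx => ->; exact: intertwine_horner_mx.
Qed.

Lemma real_poly_horner p x :
  real_poly p -> x \is Num.real -> p.[x] \is Num.real.
Proof.
move=> p_real x_real; apply/CrealP.
by rewrite -{2}p_real -{2}(conj_Creal x_real) horner_map.
Qed.

Lemma real_odd_root m (x : algC) :
  odd m -> x \is Num.real -> exists2 y, y \is Num.real & y ^+ m = x.
Proof.
move=> m_odd x_real; have m_gt0 : (0 < m)%N by case: m m_odd.
have [x_ge0|x_lt0] := real_ge0P x_real.
  by exists (m.-root x); rewrite ?ger0_real ?rootC_ge0 ?rootCK.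
exists (- m.-root (- x)).
  by rewrite rpredN ger0_real ?rootC_ge0 ?oppr_ge0 ?ltW.
by rewrite exprNn rootCK // -signr_odd m_odd expr1 mulN1r opprK.
Qed.

Lemma shift_expr_sub (q chi : {poly algC}) c m :
  (q + c *: chi) ^+ m - 'X =
  (q ^+ m - 'X) +
  chi * (c *: \sum_(i < m) (q + c *: chi) ^+ (m.-1 - i) * q ^+ i).
Proof.
have := subrXX (q + c *: chi) q m.
rewrite addrAC subrr add0r -scalerAl scalerAr.
by move=> <-; rewrite [RHS]addrC addrA subrK.
Qed.

Section LiftOneRoot.
Variables (m : nat) (q chi : {poly algC}) (l : algC).
Hypotheses (q_real : real_poly q) (chi_real : real_poly chi).
Hypotheses (chi_dvd : chi %| q ^+ m - 'X) (l_real : l \is Num.real).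

(* If chi(l) != 0 the two divisibilities are independent: chi always divides,
   and X - l divides as soon as q(l) + c chi(l) is a real m-th root of l. *)
Lemma lift_new_root : odd m -> ~~ root chi l ->
  exists2 c, c \is Num.real & ('X - l%:P) * chi %| (q + c *: chi) ^+ m - 'X.
Proof.
move=> m_odd chi_l_neq0.
have [mu mu_real mu_m] := @real_odd_root m l m_odd l_real.
have a_real : q.[l] \is Num.real by apply: real_poly_horner.
have chi_l_real : chi.[l] \is Num.real by apply: real_poly_horner.
exists ((mu - q.[l]) / chi.[l]); first by rewrite rpredM ?rpredB ?rpredV.
rewrite Gauss_dvdp; last by rewrite coprimep_sym coprimep_XsubC.
apply/andP; split.
  rewrite dvdp_XsubCl; apply/rootP.
  by rewrite !hornerE divfK // [q.[l] + _]addrC subrK mu_m subrr.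
by rewrite (shift_expr_sub q chi) dvdp_add ?dvdp_mulIl.
Qed.

(* If chi(l) = 0, write q^m - X = s chi; then (X - l) chi divides iff
   s(l) + c m q(l)^(m-1) = 0, which is solvable since q(l)^m = l != 0. *)
Lemma lift_repeated_root : (0 < m)%N -> l != 0 -> root chi l ->
  exists2 c, c \is Num.real & ('X - l%:P) * chi %| (q + c *: chi) ^+ m - 'X.
Proof.
move=> m_gt0 l_neq0 chi_l0.
pose s := (q ^+ m - 'X) %/ chi.
have s_chi : s * chi = q ^+ m - 'X := divpK chi_dvd.
have s_real : real_poly s.
  by rewrite /real_poly map_divp rmorphB rmorphXn /= q_real map_polyX chi_real.
pose a := q.[l].
have a_m : a ^+ m = l.
  have /eqP := congr1 (horner^~ l) s_chi.
  by rewrite hornerM (rootP chi_l0) mulr0 !hornerE eq_sym subr_eq0 => /eqP.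
have a_neq0 : a != 0.
  by apply: contra_neq l_neq0; rewrite -a_m => ->; rewrite expr0n eqn0Ngt m_gt0.
have d_neq0 : m%:R * a ^+ m.-1 != 0.
  by rewrite mulf_neq0 ?expf_neq0 // pnatr_eq0 -lt0n.
have a_real : a \is Num.real by apply: real_poly_horner.
have s_l_real : s.[l] \is Num.real by apply: real_poly_horner.
exists (- s.[l] / (m%:R * a ^+ m.-1)).
  by rewrite rpredM ?rpredN ?rpredV ?rpredM ?rpredX ?rpred_nat.
rewrite shift_expr_sub -s_chi [chi * _]mulrC -mulrDl dvdp_mul // dvdp_XsubCl.
apply/rootP; rewrite hornerD hornerZ horner_sum.
rewrite (eq_bigr (fun _ => a ^+ m.-1)); last first.
  move=> i _; rewrite hornerM !horner_exp hornerD hornerZ (rootP chi_l0).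
  by rewrite mulr0 addr0 -exprD subnK // -ltnS prednK.
by rewrite sumr_const card_ord -[a ^+ m.-1 *+ m]mulr_natl divfK // subrr.
Qed.

Lemma lift_root : odd m -> l != 0 ->
  exists2 q', real_poly q' & ('X - l%:P) * chi %| q' ^+ m - 'X.
Proof.
move=> m_odd l_neq0.
have [c c_real dvd_c] :
    exists2 c, c \is Num.real & ('X - l%:P) * chi %| (q + c *: chi) ^+ m - 'X.
  have [chi_l0|chi_l_neq0] := boolP (root chi l).
    by apply: lift_repeated_root => //; case: m m_odd.
  exact: lift_new_root.
exists (q + c *: chi) => //.
by rewrite /real_poly rmorphD /= map_polyZ /= q_real chi_real conj_Creal.
Qed.

End LiftOneRoot.

Lemma real_root_interpolation m (rs : seq algC) :
  odd m -> {in rs, forall z, z \is Num.real /\ z != 0} ->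
  exists2 q, real_poly q & \prod_(z <- rs) ('X - z%:P) %| q ^+ m - 'X.
Proof.
move=> m_odd; elim: rs => [|l rs IHrs] rs_ok.
  by exists 0; rewrite ?big_nil ?dvd1p // /real_poly rmorph0.
have [z z_rs|q q_real chi_dvd] := IHrs.
  by apply: rs_ok; rewrite inE z_rs orbT.
have [l_real l_neq0] := rs_ok l (mem_head l rs).
have chi_real : real_poly (\prod_(z <- rs) ('X - z%:P)).
  rewrite /real_poly rmorph_prod; apply: eq_big_seq => z z_rs.
  have [z_real _] : z \is Num.real /\ z != 0.
    by apply: rs_ok; rewrite inE z_rs orbT.
  by rewrite rmorphB /= map_polyX map_polyC /= conj_Creal.
have [q' q'_real dvd_q'] :=
  @lift_root m q _ l q_real chi_real chi_dvd l_real m_odd l_neq0.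
by exists q'; rewrite ?big_cons.
Qed.

Lemma horner_mx_odd_root k (B : 'M[algC]_k.+1) m : odd m ->
  (forall a, eigenvalue B a -> a \is Num.real /\ a != 0) ->
  exists2 q, real_poly q & horner_mx B q ^+ m = B.
Proof.
move=> m_odd B_spec.
have [rs char_B] := closed_field_poly_normal (char_poly B).
rewrite (monicP (char_poly_monic B)) scale1r in char_B.
have [|q q_real] := @real_root_interpolation m rs m_odd.
  move=> z z_rs; apply: B_spec.
  by rewrite eigenvalue_root_char char_B root_prod_XsubC.
rewrite -char_B => /dvdpP[t q_m]; exists q => //.
rewrite -rmorphXn -(subrK 'X (q ^+ m)) q_m rmorphD rmorphM /=.
by rewrite Cayley_Hamilton mulr0 add0r horner_mx_X.
Qed.

Lemma mxpowE k (A : 'M[algC]_k) m : mxpow A m = A ^+ m.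
Proof. by elim: m => [|m IHm] //=; rewrite IHm exprS mulmxE. Qed.

Theorem mainTheorem9 (n m : nat) (H B : 'M[algC]_(n + n)) :
  odd m ->
  in_Omega H -> H \in unitmx -> is_hermitian_mx H ->
  in_Omega B -> H_selfadjoint H B -> spec_neg_real B ->
  exists A : 'M[algC]_(n + n),
    [/\ in_Omega A, H_selfadjoint H A & mxpow A m = B].
Proof.
case: n H B => [|n] H B m_odd _ _ _ B_Omega B_sa B_spec.
  by exists B; split => //; apply/matrixP => [[]].
have [|q q_real q_root] := @horner_mx_odd_root (n + n.+1) B m m_odd.
  by move=> a /B_spec[a_real a_lt0]; split; last exact: ltr0_neq0.
exists (horner_mx B q); split.
- exact: Omega_horner_mx.
- exact: selfadjoint_horner_mx.
- by rewrite mxpowE.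
Qed.
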